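(* For every $n\ge 3$ and all elements $c_1,\dots,c_{n-1}$ of a commutative $\mathbb{Q}$-algebra, \[S_0(n)(c_1,\dots,c_{n-1})=\sum_{\substack{i_1+i_2=n-1\\ i_1,i_2\ge1}}c_{i_1}c_{i_2}.\]
   Context: Let $a_0,a_1,\dots$ be indeterminates and $a(x)=\sum_{i\ge0}a_ix^i$. For a positive integer $j$ set $G(x)=\prod_{i=0}^{j-1}\frac{1+a(x)x^2}{1+ix}$, $H(x)=\prod_{i=1-j}^{-1}\frac{1+ix}{1+a(x)x^2}$, $u=2j-1$, $v=j(j-1)$. For each $n\ge1$ there are unique polynomials $S_0(n),\dots,S_n(n)\in\mathbb{Q}[a_0,\dots,a_{n-2}]$, independent of $j$, such that for every positive integer $j$ the coefficient of $x^{n-1}$ in $\frac{G(x)-H(x)}{x^2}(1+a(x)x^2)$ equals $u\big(a_{n-1}+S_0(n)+\sum_{i=1}^nS_i(n)v^i\big)$. $S_i(n)(c_1,\dots,c_{n-1})$ denotes the result of substituting $a_k=c_{k+1}$ for $0\le k\le n-2$. *)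

From HB Require Import structures.
From mathcomp Require Import all_boot all_order all_algebra.
From mathcomp Require Import mpoly.
Set Implicit Arguments. Unset Strict Implicit. Unset Printing Implicit Defensive.
Import Order.TTheory GRing.Theory Num.Theory.
Local Open Scope ring_scope.

Notation Qa n := {mpoly rat[n]}.

Definition avar (n k : nat) : Qa n :=
  if insub k is Some i then 'X_i else 0.

(* Truncation of the power series a(x) = sum_i a_i x^i to degree < n.
   Only a_0,...,a_(n-1) can influence the coefficient of x^(n-1) considered
   below, so this truncation is harmless. *)
Definition apoly (n : nat) : {poly Qa n} :=
  \sum_(k < n) (avar n k)%:P * 'X^k.

(* Inverse modulo x^N of a (polynomial) power series p with p(0) = 1:
   tinv N p = sum_(k<N) (1-p)^k, so that p * tinv N p = 1 - (1-p)^N = 1 mod x^N.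
   All coefficients of x^m, m < N, of products of such truncations agree with
   those of the corresponding formal power series. *)
Definition tinv (R : comRingType) (N : nat) (p : {poly R}) : {poly R} :=
  \sum_(k < N) (1 - p) ^+ k.

(* Precision used: coefficients up to x^(n+1) of G and H are needed. *)
Definition prec (n : nat) : nat := n.+2.

(* G(x) = prod_(i=0)^(j-1) (1 + a(x) x^2) / (1 + i x)   (mod x^(n+2)) *)
Definition Gser (n j : nat) : {poly Qa n} :=
  \prod_(i < j) ((1 + apoly n * 'X^2) * tinv (prec n) (1 + i%:R *: 'X)).

(* H(x) = prod_(i=1-j)^(-1) (1 + i x) / (1 + a(x) x^2)   (mod x^(n+2)) *)
Definition Hser (n j : nat) : {poly Qa n} :=
  \prod_(i <- [seq (k%:Z - j%:Z)%R | k <- iota 1 j.-1])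
     ((1 + (i%:~R : Qa n) *: 'X) * tinv (prec n) (1 + apoly n * 'X^2)).

(* The coefficient of x^(n-1) in ((G(x) - H(x)) / x^2) * (1 + a(x) x^2);
   division by x^2 is drop_poly 2 (G - H has no terms of degree < 2). *)
Definition lhs_coef (n j : nat) : Qa n :=
  (drop_poly 2 (Gser n j - Hser n j) * (1 + apoly n * 'X^2))`_(n.-1).

Definition emb (n : nat) (p : Qa n.-1) : Qa n :=
  mmap (@mpolyC n rat) (fun i : 'I_n.-1 => avar n i) p.

Definition S_spec (n : nat) (S : nat -> Qa n.-1) : Prop :=
  forall j : nat, (0 < j)%N ->
    lhs_coef n j =
      (2 * j - 1)%N%:R *
        (avar n n.-1 + emb (S 0%N)
         + \sum_(1 <= i < n.+1) emb (S i) * ((j * (j - 1))%N%:R) ^+ i).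

Definition Seval (n : nat) (A : comAlgType rat) (p : Qa n.-1) (c : nat -> A) : A :=
  mmap (in_alg A) (fun i : 'I_n.-1 => c (i : nat).+1) p.

Arguments S_spec n S : clear implicits.
Arguments Seval n {A} p c.
Arguments emb n p : clear implicits.

From HB Require Import structures.
From mathcomp Require Import all_boot all_order all_algebra.
From mathcomp Require Import mpoly.
From mathcomp Require Import zify.
Import Order.TTheory GRing.Theory Num.Theory.
Local Open Scope ring_scope.

(* For j = 1 we have u = 1 and v = 0, G(x) = 1 + a(x) x^2 and H(x) = 1 (an
   empty product), so the defining identity becomes
     [x^(n-1)] a(x) (1 + a(x) x^2) = a_(n-1) + S_0(n),
   and the left side is a_(n-1) + sum_(i+k = n-3) a_i a_k.  Hence S_0(n) is
   that quadratic form, and the substitution a_k = c_(k+1) gives the claim. *)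

Lemma mmap_mmapC (m n : nat) (R : nzRingType) (S : comNzRingType)
    (f : {rmorphism R -> S}) (g : 'I_m -> {mpoly R[n]}) (h : 'I_n -> S)
    (p : {mpoly R[m]}) :
  mmap f h (mmap (@mpolyC n R) g p) = mmap f (fun i => mmap f h (g i)) p.
Proof.
rewrite [X in mmap f h X]/mmap rmorph_sum /=; apply: eq_bigr => mo _.
rewrite rmorphM /= mmapC /mmap1 rmorph_prod /=; congr (_ * _).
by apply: eq_bigr => i _; rewrite rmorphXn.
Qed.

Lemma mmap_avar (n k : nat) (A : comAlgType rat) (h : nat -> A) : (k < n)%N ->
  mmap (in_alg A) (fun i : 'I_n => h i) (avar n k) = h k.
Proof. by move=> lt_kn; rewrite /avar insubT /= mmapX mmap1U. Qed.

Lemma Seval_emb (n : nat) (A : comAlgType rat) (c : nat -> A) (p : Qa n.-1) :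
  mmap (in_alg A) (fun i : 'I_n => c i.+1) (emb n p) = Seval n p c.
Proof.
rewrite /emb mmap_mmapC /Seval /mmap; apply: eq_bigr => m _; congr (_ * _).
apply: mmap1_eq => i; have lt_in : (i < n)%N by have := ltn_ord i; lia.
exact: (@mmap_avar _ _ _ (fun k => c k.+1) lt_in).
Qed.

Lemma tinv1 (R : comNzRingType) (N : nat) : (0 < N)%N -> tinv N (1 : {poly R}) = 1.
Proof.
case: N => // N _; rewrite /tinv big_ord_recl expr0 subrr big1 ?addr0 // => k _.
by rewrite exprS mul0r.
Qed.

Lemma Gser1 (n : nat) : Gser n 1 = 1 + apoly n * 'X^2.
Proof. by rewrite /Gser big_ord1 /= scale0r addr0 tinv1 ?mulr1. Qed.

Lemma Hser1 (n : nat) : Hser n 1 = 1.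
Proof. by rewrite /Hser big_nil. Qed.

Lemma coef_apoly (n k : nat) : (k < n)%N -> (apoly n)`_k = avar n k.
Proof.
move=> lt_kn; rewrite /apoly coef_sum (bigD1 (Ordinal lt_kn)) //= coefCM coefXn eqxx mulr1.
rewrite big1 ?addr0 // => i ne_ik; rewrite coefCM coefXn.
by case: eqP => [eq_ik|]; [case/eqP: ne_ik; exact: val_inj | rewrite mulr0].
Qed.

Lemma lhs_coef1 (n : nat) : (2 < n)%N ->
  lhs_coef n 1 = avar n n.-1 + \sum_(i < n.-2) avar n i * avar n (n - 3 - i).
Proof.
move=> lt2n; have lt_pn : (n.-1 < n)%N by lia.
have ge_p2 : (n.-1 < 2)%N = false by lia.
rewrite /lhs_coef Gser1 Hser1 addrC addKr drop_polyMXn_id mulrDr mulr1 coefD mulrA.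
rewrite coefMXn ge_p2 coef_apoly // coefM (_ : (n.-1 - 2).+1 = n.-2); last by lia.
congr (_ + _); apply: eq_bigr => i _.
have lt_i := ltn_ord i; rewrite !coef_apoly; [congr (_ * avar n _) | |]; lia.
Qed.

Lemma emb_S0 (n : nat) (S : nat -> Qa n.-1) : (2 < n)%N -> S_spec n S ->
  emb n (S 0%N) = \sum_(i < n.-2) avar n i * avar n (n - 3 - i).
Proof.
move=> lt2n hS; have := hS 1%N isT; rewrite big_nat big1 => [|i /andP[lt0i _]].
  by rewrite lhs_coef1 // mul1r addr0 => /addrI.
by rewrite muln0 expr0n gtn_eqF ?mulr0.
Qed.

Theorem proposition4p2 (n : nat) (hn : (3 <= n)%N) (S : nat -> {mpoly rat[n.-1]})
    (hS : S_spec n S) (A : comAlgType rat) (c : nat -> A) :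
  Seval n (S 0%N) c = \sum_(1 <= i1 < n.-1) c i1 * c (n.-1 - i1)%N.
Proof.
rewrite -Seval_emb emb_S0 // rmorph_sum /= big_add1 big_mkord.
apply: eq_bigr => i _; have lt_i := ltn_ord i.
rewrite rmorphM /= !(@mmap_avar _ _ _ (fun k => c k.+1)); [congr (_ * c _) | |]; lia.
Qed.
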